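(* $\mathrm{Log}_{=1}(\mathbb{R})=\mathrm{Log}_{=1}(\mathbb{Q})$.
   Context: Modal formulas are built from a countable set of propositional variables using $\bot$, $\to$ and one unary modality $\lozenge$. A frame is a pair $(X,R)$; a valuation assigns subsets of $X$ to variables; $x\models\lozenge\varphi$ iff there is $y$ with $xRy$ and $y\models\varphi$. A formula is valid in a frame if true at every point under every valuation. For a metric space $(X,d)$, $\mathrm{Log}_{=1}(X)$ is the set of modal formulas valid in the frame $(X,R_{=1})$, where $xR_{=1}y$ iff $d(x,y)=1$. $\mathbb{R}$ and $\mathbb{Q}$ carry the metric $d(x,y)=|x-y|$. *)

From Stdlib Require Import Reals QArith.
Open Scope R_scope.

Inductive form : Type :=
| Var : nat -> form
| Bot : form
| Imp : form -> form -> form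
| Dia : form -> form.

Fixpoint sat {X : Type} (Rel : X -> X -> Prop) (V : nat -> X -> Prop)
  (x : X) (phi : form) : Prop :=
  match phi with
  | Var n => V n x
  | Bot => False
  | Imp a b => sat Rel V x a -> sat Rel V x b
  | Dia a => exists y, Rel x y /\ sat Rel V y a
  end.

Definition valid_in {X : Type} (Rel : X -> X -> Prop) (phi : form) : Prop :=
  forall (V : nat -> X -> Prop) (x : X), sat Rel V x phi.

Definition R_eq1 {X : Type} (d : X -> X -> R) (x y : X) : Prop := d x y = 1.

Definition Log_eq1 {X : Type} (d : X -> X -> R) (phi : form) : Prop :=
  valid_in (R_eq1 d) phi.

Definition dR (x y : R) : R := Rabs (x - y).

(* The rationals, as the subspace of R consisting of the values of rationals
   (so points are canonical), with the induced metric |x - y|. *)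
Definition Qpt : Type := { x : R | exists q : Q, x = Q2R q }.
Definition dQ (x y : Qpt) : R := Rabs (proj1_sig x - proj1_sig y).

From Stdlib Require Import Reals QArith Qreals Lra ProofIrrelevance.
Open Scope R_scope.

(* Both frames are disjoint unions of copies of the integer line: for every
   point x, the map n |-> x + n is an injective p-morphism from (Z, |m - n| = 1)
   onto the component of x.  P-morphisms preserve truth, so a formula is valid
   in either frame iff it is valid in Z with the same relation. *)

Definition dZ (m n : Z) : R := Rabs (IZR m - IZR n).

Definition pmorphism {X Y : Type} (RY : Y -> Y -> Prop) (RX : X -> X -> Prop)
  (f : Y -> X) : Prop :=
  (forall y y', RY y y' -> RX (f y) (f y')) /\
  (forall y x', RX (f y) x' -> exists y', RY y y' /\ x' = f y').

Section PMorphisms.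
Context {X Y : Type} (RY : Y -> Y -> Prop) (RX : X -> X -> Prop).

Lemma sat_pmorphism (f : Y -> X) : pmorphism RY RX f ->
  forall phi V y, sat RX V (f y) phi <-> sat RY (fun k z => V k (f z)) y phi.
Proof.
  intros [forth back] phi.
  induction phi as [k| |a IHa b IHb|a IHa]; intros V y; simpl.
  - reflexivity.
  - reflexivity.
  - rewrite IHa, IHb; reflexivity.
  - split.
    + intros [x' [Hx' Ha]]. destruct (back _ _ Hx') as [y' [Hy' ->]].
      exists y'; split; [exact Hy' | apply IHa; exact Ha].
    + intros [y' [Hy' Ha]].
      exists (f y'); split; [apply forth; exact Hy' | apply IHa; exact Ha].
Qed.

Lemma sat_ext (V W : nat -> Y -> Prop) : (forall k y, V k y <-> W k y) ->
  forall phi y, sat RY V y phi <-> sat RY W y phi.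
Proof.
  intros HVW phi; induction phi as [k| |a IHa b IHb|a IHa]; intros y; simpl.
  - apply HVW.
  - reflexivity.
  - rewrite IHa, IHb; reflexivity.
  - split; intros [y' [Hy' Ha]]; exists y'; split; try exact Hy'; apply IHa; exact Ha.
Qed.

Lemma valid_in_pmorphic_cover phi :
  (forall x, exists (f : Y -> X) (y : Y), pmorphism RY RX f /\ f y = x) ->
  valid_in RY phi -> valid_in RX phi.
Proof.
  intros cover Hphi V x.
  destruct (cover x) as [f [y [Hf <-]]].
  apply (sat_pmorphism f Hf), Hphi.
Qed.

Lemma valid_in_pmorphism_inj (f : Y -> X) phi :
  pmorphism RY RX f -> (forall y y', f y = f y' -> y = y') ->
  valid_in RX phi -> valid_in RY phi.
Proof.
  intros Hf f_inj Hphi U y.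
  (* Transport U along f; injectivity makes the pulled-back valuation equal to U. *)
  set (V k x := exists y', x = f y' /\ U k y').
  apply (sat_ext (fun k z => V k (f z))).
  - intros k z; split.
    + intros [y' [Hz HU]]. rewrite (f_inj _ _ Hz); exact HU.
    + intros HU; exists z; split; [reflexivity | exact HU].
  - apply (sat_pmorphism f Hf), Hphi.
Qed.

End PMorphisms.

Section IntegerTranslations.
Context {X : Type} (e : X -> R) (shift : X -> Z -> X) (x0 : X).
Hypothesis e_inj : forall x y, e x = e y -> x = y.
Hypothesis e_shift : forall x n, e (shift x n) = e x + IZR n.

Lemma shift_pmorphism x :
  pmorphism (R_eq1 dZ) (R_eq1 (fun x y => Rabs (e x - e y))) (shift x).
Proof.
  unfold R_eq1, dZ; split.
  - intros m n Hmn. rewrite !e_shift.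
    replace (e x + IZR m - (e x + IZR n)) with (IZR m - IZR n) by ring.
    exact Hmn.
  - intros m y Hy. rewrite e_shift in Hy.
    assert (Hn : e y = e x + IZR (m + 1) \/ e y = e x + IZR (m - 1)).
    { rewrite plus_IZR, minus_IZR.
      revert Hy; unfold Rabs; destruct Rcase_abs; lra. }
    destruct Hn as [Hn | Hn]; [exists (m + 1)%Z | exists (m - 1)%Z];
      (split; [| apply e_inj; rewrite e_shift; exact Hn]);
      rewrite ?plus_IZR, ?minus_IZR; unfold Rabs; destruct Rcase_abs; lra.
Qed.

Lemma Log_eq1_translation_invariant phi :
  Log_eq1 (fun x y => Rabs (e x - e y)) phi <-> Log_eq1 dZ phi.
Proof.
  split.
  - apply (valid_in_pmorphism_inj _ _ (shift x0) phi (shift_pmorphism x0)).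
    intros m n Hmn. apply eq_IZR.
    apply (f_equal e) in Hmn. rewrite !e_shift in Hmn. lra.
  - apply valid_in_pmorphic_cover. intros x.
    exists (shift x), 0%Z; split; [apply shift_pmorphism |].
    apply e_inj; rewrite e_shift; ring.
Qed.

End IntegerTranslations.

Definition Qpt_shift (x : Qpt) (n : Z) : Qpt.
Proof.
  exists (proj1_sig x + IZR n).
  destruct x as [r [q ->]]. exists (q + inject_Z n)%Q.
  rewrite Q2R_plus; f_equal. unfold Q2R; simpl. field.
Defined.

Lemma Qpt_proj1_inj (x y : Qpt) : proj1_sig x = proj1_sig y -> x = y.
Proof. apply eq_sig_hprop; intros; apply proof_irrelevance. Qed.

Definition Qpt0 : Qpt := exist _ (Q2R 0) (ex_intro _ 0%Q eq_refl).

Theorem proposition4p1 :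
  forall phi : form, Log_eq1 dR phi <-> Log_eq1 dQ phi.
Proof.
  intros phi; transitivity (Log_eq1 dZ phi).
  - apply (Log_eq1_translation_invariant (fun x => x) (fun x n => x + IZR n) 0);
      auto.
  - symmetry.
    apply (Log_eq1_translation_invariant (@proj1_sig _ _) Qpt_shift Qpt0);
      [exact Qpt_proj1_inj | reflexivity].
Qed.
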